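(* Let $n\ge 2$ be an integer and let $G_n=\langle a,b \mid (ab)^n\rangle$. For every rational number $s\in[1/n,1]$ and every nonzero integer $t$, the element $u_s$ is not conjugate in $G_n$ to $a^t$ nor to $b^t$. (That is, $\alpha_s$ is not peripheral in the even Heckoid orbifold of index $n$ for the trivial knot.)
   Context: Words $u_s\in F(a,b)$ for rational $0<s\le1$: write $s=q/p$ with $p\ge1$, $\gcd(p,q)=1$, and set $\epsilon_i=(-1)^{\lfloor iq/p\rfloor}$ for $1\le i\le p-1$. If $p$ is odd, $u_{q/p}=a\,\hat u\, b^{(-1)^q}\,\hat u^{-1}$ with $\hat u=b^{\epsilon_1}a^{\epsilon_2}\cdots b^{\epsilon_{p-2}}a^{\epsilon_{p-1}}$ (letters alternate $b,a,\dots$; empty if $p=1$). If $p$ is even, $u_{q/p}=a\,\hat u\,a^{-1}\,\hat u^{-1}$ with $\hat u=b^{\epsilon_1}a^{\epsilon_2}\cdots a^{\epsilon_{p-2}}b^{\epsilon_{p-1}}$. The generators $a,b$ are meridians; a loop is peripheral iff it represents the conjugacy class of a power of a meridian. *)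

From Stdlib Require Import List Arith ZArith Relations.
Import ListNotations.

(* A letter is (generator, sign): generator true = a, false = b;
   sign true = exponent +1, false = exponent -1. *)
Definition letter := (bool * bool)%type.
Definition word := list letter.

Definition ga : bool := true.
Definition gb : bool := false.

Definition inv_letter (l : letter) : letter := (fst l, negb (snd l)).
Definition inv_word (w : word) : word := rev (map inv_letter w).

Definition gpow (g : bool) (t : Z) : word :=
  if (0 <=? t)%Z then repeat (g, true) (Z.to_nat t)
  else repeat (g, false) (Z.to_nat (- t)).

Definition relator (n : nat) : word :=
  concat (repeat [(ga, true); (gb, true)] n).

Inductive gstep (n : nat) : word -> word -> Prop :=
| gstep_free : forall w1 w2 l, gstep n (w1 ++ [l; inv_letter l] ++ w2) (w1 ++ w2)
| gstep_rel : forall w1 w2, gstep n (w1 ++ relator n ++ w2) (w1 ++ w2)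
| gstep_relinv : forall w1 w2, gstep n (w1 ++ inv_word (relator n) ++ w2) (w1 ++ w2).

Definition geq (n : nat) : word -> word -> Prop := clos_refl_sym_trans word (gstep n).

Definition gconj (n : nat) (u v : word) : Prop :=
  exists g : word, geq n (g ++ u ++ inv_word g) v.

(* epsilon_i = (-1)^floor(i q / p), encoded as sign: true iff +1 *)
Definition eps (q p i : nat) : bool := Nat.even (i * q / p).

Definition uhat (q p : nat) : word :=
  map (fun i => (if Nat.odd i then gb else ga, eps q p i)) (seq 1 (p - 1)).

Definition u_word (q p : nat) : word :=
  [(ga, true)] ++ uhat q p ++
  (if Nat.odd p then [(gb, Nat.even q)] else [(ga, false)]) ++
  inv_word (uhat q p).

(* The assignment a |-> (1, 1), b |-> (-1, 0) into the abelian group Z x Z/n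
   kills (ab)^n, so it induces a homomorphism on G_n, whose values are
   conjugacy invariants.  Since u_s is a product of a, a conjugate of û and
   the inverse of û, its image is (0, 0), (0, 1) or (2, 1) according to the
   parities of p and q, whereas a^t |-> (t, t) and b^t |-> (-t, 0).  For
   t <> 0 and n >= 2 these never agree. *)

From Stdlib Require Import List Arith ZArith Relations Lia.
Import ListNotations.

Local Open Scope Z_scope.

Definition exp_sum (f : letter -> Z) (w : word) : Z :=
  fold_right (fun l s => f l + s) 0 w.

Lemma exp_sum_app f w1 w2 : exp_sum f (w1 ++ w2) = exp_sum f w1 + exp_sum f w2.
Proof. induction w1 as [|l w1 IH]; simpl; [reflexivity | rewrite IH; lia]. Qed.

Lemma exp_sum_rev f w : exp_sum f (rev w) = exp_sum f w.
Proof.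
  induction w as [|l w IH]; simpl; [reflexivity|].
  rewrite exp_sum_app, IH; simpl; lia.
Qed.

Lemma exp_sum_repeat f l k : exp_sum f (repeat l k) = Z.of_nat k * f l.
Proof. induction k as [|k IH]; simpl repeat; simpl exp_sum; [reflexivity | rewrite IH; lia]. Qed.

Lemma exp_sum_relator f n :
  exp_sum f (relator n) = Z.of_nat n * (f (ga, true) + f (gb, true)).
Proof.
  induction n as [|n IH]; [reflexivity|].
  change (relator (S n)) with ([(ga, true); (gb, true)] ++ relator n).
  rewrite exp_sum_app, IH, Nat2Z.inj_succ; simpl; lia.
Qed.

Section OddWeight.

Variable f : letter -> Z.
Hypothesis f_inv_letter : forall l, f (inv_letter l) = - f l.

Lemma exp_sum_inv_word w : exp_sum f (inv_word w) = - exp_sum f w.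
Proof.
  unfold inv_word; rewrite exp_sum_rev.
  induction w as [|l w IH]; simpl; [reflexivity | rewrite f_inv_letter, IH; lia].
Qed.

Lemma exp_sum_conjugate g w : exp_sum f (g ++ w ++ inv_word g) = exp_sum f w.
Proof. rewrite !exp_sum_app, exp_sum_inv_word; lia. Qed.

Lemma exp_sum_gpow g t : exp_sum f (gpow g t) = t * f (g, true).
Proof.
  unfold gpow; destruct (Z.leb_spec 0 t); rewrite exp_sum_repeat, Z2Nat.id by lia.
  - lia.
  - change (g, false) with (inv_letter (g, true)); rewrite f_inv_letter; lia.
Qed.

Lemma exp_sum_u_word q p :
  exp_sum f (u_word q p) =
  f (ga, true) + f (if Nat.odd p then (gb, Nat.even q) else (ga, false)).
Proof.
  unfold u_word; rewrite exp_sum_app.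
  destruct (Nat.odd p); rewrite exp_sum_conjugate; simpl; lia.
Qed.

Variables (n : nat) (m : Z).
Hypothesis m_dvd_relator : (m | exp_sum f (relator n)).

Lemma gstep_exp_sum u v : gstep n u v -> (m | exp_sum f u - exp_sum f v).
Proof.
  intros [w1 w2 l | w1 w2 | w1 w2]; rewrite !exp_sum_app.
  - replace (_ - _) with 0 by (simpl; rewrite f_inv_letter; lia).
    apply Z.divide_0_r.
  - replace (_ - _) with (exp_sum f (relator n)) by lia; assumption.
  - rewrite exp_sum_inv_word.
    replace (_ - _) with (- exp_sum f (relator n)) by lia.
    now apply Z.divide_opp_r.
Qed.

Lemma geq_exp_sum u v : geq n u v -> (m | exp_sum f u - exp_sum f v).
Proof.
  induction 1 as [x y Hxy | x | x y _ IH | x y z _ IHxy _ IHyz].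
  - now apply gstep_exp_sum.
  - rewrite Z.sub_diag; apply Z.divide_0_r.
  - replace (_ - _) with (- (exp_sum f x - exp_sum f y)) by lia.
    now apply Z.divide_opp_r.
  - replace (_ - _) with ((exp_sum f x - exp_sum f y) + (exp_sum f y - exp_sum f z))
      by lia.
    now apply Z.divide_add_r.
Qed.

Lemma gconj_exp_sum u v : gconj n u v -> (m | exp_sum f u - exp_sum f v).
Proof.
  intros [g Hg]; apply geq_exp_sum in Hg.
  now rewrite exp_sum_conjugate in Hg.
Qed.

End OddWeight.

Definition letter_sign (l : letter) : Z := if snd l then 1 else -1.

(* The two coordinates of the homomorphism to Z x Z/n. *)
Definition weight_ab (l : letter) : Z := if fst l then letter_sign l else - letter_sign l.
Definition weight_a (l : letter) : Z := if fst l then letter_sign l else 0.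

Lemma weight_ab_inv_letter l : weight_ab (inv_letter l) = - weight_ab l.
Proof. now destruct l as [[] []]. Qed.

Lemma weight_a_inv_letter l : weight_a (inv_letter l) = - weight_a l.
Proof. now destruct l as [[] []]. Qed.

Lemma gconj_weight_ab n u v :
  gconj n u v -> exp_sum weight_ab u = exp_sum weight_ab v.
Proof.
  intros H; apply Z.sub_move_0_r, Z.divide_0_l.
  apply (gconj_exp_sum weight_ab weight_ab_inv_letter n); [|exact H].
  rewrite exp_sum_relator; simpl; rewrite Z.mul_0_r; apply Z.divide_0_r.
Qed.

Lemma gconj_weight_a n u v :
  gconj n u v -> (Z.of_nat n | exp_sum weight_a u - exp_sum weight_a v).
Proof.
  apply gconj_exp_sum; [exact weight_a_inv_letter|].
  rewrite exp_sum_relator; simpl; rewrite Z.mul_1_r; apply Z.divide_refl.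
Qed.

Lemma not_dvd_one n : (2 <= n)%nat -> ~ (Z.of_nat n | 1) /\ ~ (Z.of_nat n | -1).
Proof.
  intros Hn; split; [|rewrite <- Z.divide_opp_r]; intros H;
    apply Z.divide_1_r in H; lia.
Qed.

Local Close Scope Z_scope.

Theorem theorem2p2 :
  forall (n p q : nat),
    2 <= n ->
    1 <= p -> Nat.gcd p q = 1 ->
    q <= p -> p <= n * q ->
    forall t : Z, t <> 0%Z ->
      ~ gconj n (u_word q p) (gpow ga t) /\ ~ gconj n (u_word q p) (gpow gb t).
Proof.
  intros n p q Hn _ _ _ _ t Ht.
  destruct (not_dvd_one n Hn) as [Hndvd1 Hndvd_1].
  split; intros Hconj;
    pose proof (gconj_weight_ab _ _ _ Hconj) as Hab;
    pose proof (gconj_weight_a _ _ _ Hconj) as Ha;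
    rewrite exp_sum_u_word, exp_sum_gpow in Hab, Ha
      by (exact weight_ab_inv_letter || exact weight_a_inv_letter);
    destruct (Nat.odd p), (Nat.even q);
    cbv [weight_ab weight_a letter_sign ga gb fst snd] in Hab, Ha; try lia.
  - replace t with 2%Z in Ha by lia; exact (Hndvd_1 Ha).
  - replace t with (-2)%Z in Ha by lia; exact (Hndvd1 Ha).
Qed.
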